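(* Let $a, n \in \mathbb{N}$ and let $(F, M, \mathcal{R}, c)$ be an instance of the feasibility problem such that one of the following holds: (i) $c_r \in \{a, na\}$ for all $r \in \mathcal{R}$ and $R_a \ge n-1$; or (ii) $c_r \in \{a, 2a, \dots, na\}$ for all $r \in \mathcal{R}$ and $R_{ia} > 0$ for every $i = 1, \dots, n$; or (iii) $c_r \in \{2^0 a, 2^1 a, \dots, 2^n a\}$ for all $r \in \mathcal{R}$ and $R_{2^i a} > 0$ for every $i = 0, \dots, n$. Then the instance is feasible if and only if $$\left\lceil \frac{F}{a} \right\rceil + \left\lceil \frac{M}{a} \right\rceil \le \frac{1}{a} \sum_{r \in \mathcal{R}} c_r.$$
   Context: An instance $(F, M, \mathcal{R}, c)$ of the feasibility problem (of patient-to-room assignment with gender separation, for a single time period) consists of nonnegative integers $F$ (number of female patients) and $M$ (number of male patients), a finite set $\mathcal{R}$ of rooms, and a capacity $c_r \in \mathbb{N}$ (positive integer) for each room $r \in \mathcal{R}$. The instance is called feasible if there exists a subset $S \subseteq \mathcal{R}$ with $\sum_{r \in S} c_r \ge F$ and $\sum_{r \in \mathcal{R} \setminus S} c_r \ge M$. For $k \in \mathbb{N}$, $R_k := |\{ r \in \mathcal{R} : c_r = k\}|$ denotes the number of rooms of capacity $k$. *)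

From mathcomp Require Import all_boot all_order all_algebra.
Set Implicit Arguments. Unset Strict Implicit. Unset Printing Implicit Defensive.
Import Order.TTheory GRing.Theory Num.Theory.

(* An instance (F, M, R, c): rooms are the elements of a finite type rT,
   c : rT -> nat with c r > 0 for all r. *)

Definition feasible (rT : finType) (c : rT -> nat) (F M : nat) : Prop :=
  exists S : {set rT},
    F <= \sum_(r in S) c r /\ M <= \sum_(r in ~: S) c r.

Definition Rk (rT : finType) (c : rT -> nat) (k : nat) : nat :=
  #|[set r | c r == k]|.

(* Dividing the capacities by a turns them into integer weights d and the
   demands into the ceilings of F/a and M/a.  Under each of the three
   hypotheses every weight exceeds the total of the strictly smaller weights
   by at most one; inserting the rooms by increasing weight then shows that
   every integer between 0 and the total weight is the weight of some set of
   rooms, so the demands can be split exactly when their sum is at most the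
   total weight. *)

From mathcomp Require Import all_boot all_order all_algebra.
From mathcomp Require Import zify.
Import Order.TTheory GRing.Theory Num.Theory.
Set Implicit Arguments. Unset Strict Implicit.

Section SubsetSums.
Variables (T : finType) (d : T -> nat).

Lemma leq_sum_subpred (P Q : pred T) :
  (forall r, P r -> Q r) -> \sum_(r | P r) d r <= \sum_(r | Q r) d r.
Proof. exact: (@sub_le_big _ addn leq leqnn (fun m n => leq_addr n m) 0). Qed.

Lemma leq_sum_term (P : pred T) y : P y -> d y <= \sum_(r | P r) d r.
Proof. by move=> Py; rewrite (bigD1 y) //= leq_addr. Qed.

Lemma sum_setC (S : {set T}) :
  \sum_r d r = \sum_(r in S) d r + \sum_(r in ~: S) d r.
Proof.
rewrite (bigID (mem S)) /=.
by congr (_ + _); apply: eq_bigl => r; rewrite ?inE.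
Qed.

Definition sums_complete (A : {set T}) :=
  forall s, s <= \sum_(r in A) d r ->
  exists2 S : {set T}, S \subset A & \sum_(r in S) d r = s.

Lemma sums_complete0 : sums_complete set0.
Proof.
move=> s; rewrite big_set0 leqn0 => /eqP->.
by exists set0; rewrite ?sub0set ?big_set0.
Qed.

Lemma sums_completeU1 (A : {set T}) x :
  sums_complete A -> x \notin A -> d x <= (\sum_(r in A) d r).+1 ->
  sums_complete (x |: A).
Proof.
move=> cA xA dx s; rewrite big_setU1 //= => le_s.
have [le_sA | lt_As] := leqP s (\sum_(r in A) d r).
  have [S SA <-] := cA s le_sA.
  by exists S; rewrite // (subset_trans SA (subsetU1 _ _)).
have [S SA eS] := cA (s - d x) ltac:(lia).
have xS : x \notin S by apply: contra xA; apply: (subsetP SA).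
by exists (x |: S); rewrite ?setUS // big_setU1 //= eS; lia.
Qed.

Lemma sums_complete_grow (B A : {set T}) :
  sums_complete B -> B \subset A ->
  (forall x, x \in A :\: B -> d x <= (\sum_(r in B) d r).+1) ->
  sums_complete A.
Proof.
move=> cB BA small.
suff grow k (C : {set T}) :
    #|C| = k -> C \subset A :\: B -> sums_complete (B :|: C).
  have <- : B :|: A :\: B = A by rewrite -[RHS](setID A B) (setIidPr BA).
  exact: grow erefl (subxx _).
elim: k C => [|k IH] C cardC CAB.
  by move: cardC => /eqP; rewrite cards_eq0 => /eqP->; rewrite setU0.
have [x xC] : exists x, x \in C by apply/card_gt0P; rewrite cardC.
have CxAB : C :\ x \subset A :\: B := subset_trans (subD1set C x) CAB.
rewrite -(setD1K xC) setUCA; apply: sums_completeU1.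
- by apply: IH CxAB; rewrite (cardsD1 x C) xC in cardC; case: cardC.
- have /setDP[_ xB] := subsetP CAB x xC.
  by rewrite !inE negb_or xB eqxx.
- apply: leq_trans (small x (subsetP CAB x xC)) _.
  by rewrite ltnS; apply: leq_sum_subpred => r; rewrite inE => ->.
Qed.

Definition gapless := forall r, d r <= (\sum_(x | d x < d r) d x).+1.

Lemma gapless_sums_complete : gapless -> sums_complete [set: T].
Proof.
move=> gap.
have below v : sums_complete [set r | d r <= v].
  elim: v => [|v IH].
    apply: (sums_complete_grow sums_complete0); first exact: sub0set.
    by move=> x; rewrite !inE leqn0 big_set0 => /andP[_ /eqP->].
  apply: (sums_complete_grow IH).
    by apply/subsetP => y; rewrite !inE => /leqW.
  move=> x; rewrite !inE -ltnNge => /andP[lt_vx le_xv].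
  have dx : d x = v.+1 by apply/eqP; rewrite eqn_leq le_xv.
  have -> : \sum_(r in [set r | d r <= v]) d r = \sum_(y | d y < d x) d y.
    by apply: eq_bigl => y; rewrite inE dx ltnS.
  exact: gap.
have -> : [set: T] = [set r | d r <= \max_i d i].
  by apply/setP => y; rewrite !inE leq_bigmax.
exact: below.
Qed.

Lemma sums_complete_split f m : sums_complete [set: T] ->
  (exists S : {set T}, f <= \sum_(r in S) d r /\ m <= \sum_(r in ~: S) d r)
  <-> f + m <= \sum_r d r.
Proof.
move=> cT; split => [[S [fS mS]] | le_fm]; first by rewrite (sum_setC S) leq_add.
have [|S _ eS] := cT f.
  rewrite (eq_bigl xpredT) => [|r]; last by rewrite inE.
  by apply: leq_trans le_fm; rewrite leq_addr.
by exists S; split; [rewrite eS | have := sum_setC S; rewrite eS; lia].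
Qed.

Lemma gapless_two_values n :
  (forall r, d r = 1 \/ d r = n) -> n - 1 <= #|[set r | d r == 1]| -> gapless.
Proof.
move=> values ones r; have [le_r1 | lt_1r] := leqP (d r) 1.
  exact: leq_trans le_r1 _.
have drn : d r = n by case: (values r) lt_1r => ->.
apply: leq_trans (_ : #|[set r | d r == 1]|.+1 <= _); first by rewrite drn; lia.
rewrite ltnS -sum1_card (eq_bigr d) => [|x]; last by rewrite inE => /eqP->.
by apply: leq_sum_subpred => x; rewrite inE => /eqP->.
Qed.

Lemma gapless_predn_closed :
  (forall r, 1 < d r -> exists y, d y = (d r).-1) -> gapless.
Proof.
move=> closed r; have [le_r1 | lt_1r] := leqP (d r) 1.
  exact: leq_trans le_r1 _.
have [y dy] := closed r lt_1r.
apply: leq_trans (_ : (d y).+1 <= _); first by lia.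
by rewrite ltnS leq_sum_term // dy; lia.
Qed.

Lemma gapless_powers2 :
  (forall r, exists i, d r = 2 ^ i) ->
  (forall r j, 2 ^ j < d r -> exists y, d y = 2 ^ j) -> gapless.
Proof.
move=> pow2 below r; have [i dr] := pow2 r.
suff sum_below j : j <= i -> 2 ^ j - 1 <= \sum_(x | d x < 2 ^ j) d x.
  by have := sum_below i (leqnn i); rewrite dr; have := expn_gt0 2 i; lia.
elim: j => [|j IH] le_ji; first by rewrite expn0.
have lt_jSj : 2 ^ j < 2 ^ j.+1 by rewrite ltn_exp2l.
have [y dy] := below r j ltac:(rewrite dr ltn_exp2l; lia).
rewrite (bigID (fun x => d x < 2 ^ j)) /=.
have -> : \sum_(x | (d x < 2 ^ j.+1) && (d x < 2 ^ j)) d x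
          = \sum_(x | d x < 2 ^ j) d x.
  by apply: eq_bigl => x; apply: andb_idl => /ltn_trans; apply.
have := @leq_sum_term (fun x => (d x < 2 ^ j.+1) && ~~ (d x < 2 ^ j)) y.
rewrite /= dy lt_jSj ltnn expnS => /(_ isT).
have := IH (ltnW le_ji); have := expn_gt0 2 j; lia.
Qed.

End SubsetSums.

Lemma ceil_divn_leq (X a s : nat) :
  0 < a -> ((X + a.-1) %/ a <= s) = (X <= s * a).
Proof. by move=> a_gt0; rewrite -ltnS ltn_divLR // mulSn; lia. Qed.

Lemma ceil_ratn_div (X a : nat) : 0 < a ->
  (Num.ceil (X%:R / a%:R : rat) = ((X + a.-1) %/ a)%N%:Z)%R.
Proof.
move=> a_gt0; set k := (_ %/ a)%N.
have le_ka : k * a <= X + a.-1 := leq_divM _ _.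
have le_Xk : X <= k * a by have := ltn_ceil (X + a.-1) a_gt0; rewrite mulSn; lia.
apply/eqP; rewrite ceil_eq ler_pdivrMr ?ltr0n // -natrM ler_nat le_Xk andbT.
case: k le_ka {le_Xk} => [|k] le_ka.
  by rewrite sub0r (lt_le_trans _ (divr_ge0 (ler0n _ X) (ler0n _ a))) // ltrN10.
rewrite -addn1 PoszD addrK ltr_pdivlMr ?ltr0n // -natrM ltr_nat.
by rewrite mulSn in le_ka; lia.
Qed.

Lemma feasible_scaled (rT : finType) (c d : rT -> nat) (a F M : nat) :
  0 < a -> (forall r, c r = d r * a) ->
  feasible c F M <->
  exists S : {set rT}, (F + a.-1) %/ a <= \sum_(r in S) d r /\
                       (M + a.-1) %/ a <= \sum_(r in ~: S) d r.
Proof.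
move=> a_gt0 c_d.
have sum_c (S : {set rT}) : \sum_(r in S) c r = (\sum_(r in S) d r) * a.
  by rewrite big_distrl; apply: eq_bigr.
have scale_S (S : {set rT}) :
    F <= \sum_(r in S) c r /\ M <= \sum_(r in ~: S) c r <->
    (F + a.-1) %/ a <= \sum_(r in S) d r /\
    (M + a.-1) %/ a <= \sum_(r in ~: S) d r.
  by rewrite !sum_c !ceil_divn_leq.
by split=> -[S /scale_S]; exists S.
Qed.

Lemma Rk_scaled (rT : finType) (c d : rT -> nat) (a k : nat) :
  0 < a -> (forall r, c r = d r * a) -> Rk c (k * a) = #|[set r | d r == k]|.
Proof. by move=> a_gt0 c_d; apply: eq_card => r; rewrite !inE c_d eqn_pmul2r. Qed.

Theorem mainTheorem2 (a n F M : nat) (rT : finType) (c : rT -> nat) :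
  0 < a ->
  (forall r, 0 < c r) ->
  ( ((forall r, c r = a \/ c r = n * a) /\ n - 1 <= Rk c a)
    \/ ((forall r, exists2 i, 1 <= i <= n & c r = i * a) /\
        (forall i, 1 <= i <= n -> 0 < Rk c (i * a)))
    \/ ((forall r, exists2 i, i <= n & c r = 2 ^ i * a) /\
        (forall i, i <= n -> 0 < Rk c (2 ^ i * a))) ) ->
  (feasible c F M <->
   ((Num.ceil ((F%:R / a%:R) : rat) + Num.ceil ((M%:R / a%:R) : rat))%:~R
      <= (a%:R)^-1 * (\sum_r c r)%:R :> rat)%R).
Proof.
move=> a_gt0 _ cases; pose d r := c r %/ a.
have c_d r : c r = d r * a.
  rewrite /d; case: cases => [[/(_ r)[]-> _] | [[/(_ r)[i _ ->] _] |
                                                [/(_ r)[i _ ->] _]]];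
  by rewrite ?mulnK ?divnn ?a_gt0 ?mul1n.
have attained k : 0 < Rk c (k * a) -> exists y, d y = k.
  rewrite (Rk_scaled _ a_gt0 c_d) => /card_gt0P[y].
  by rewrite inE => /eqP; exists y.
have gap : gapless d.
  case: cases => [[sizes ones] | [[sizes all] | [sizes all]]].
  - apply: (gapless_two_values (n := n)).
      move=> r; rewrite /d; case: (sizes r) => ->; last by right; rewrite mulnK.
      by left; rewrite divnn a_gt0.
    by rewrite -(Rk_scaled _ a_gt0 c_d) mul1n.
  - apply: gapless_predn_closed => r; have [i /andP[i_ge1 i_le] ci] := sizes r.
    rewrite /d ci mulnK // => i_gt1; apply: attained; apply: all; lia.
  - apply: gapless_powers2 => [r | r j].
      by have [i _ ci] := sizes r; exists i; rewrite /d ci mulnK.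
    have [i i_le ci] := sizes r; rewrite /d ci mulnK // ltn_exp2l // => lt_ji.
    by apply: attained; apply: all; lia.
rewrite (feasible_scaled _ _ a_gt0 c_d).
rewrite (sums_complete_split _ _ (gapless_sums_complete gap)).
rewrite !ceil_ratn_div // (eq_bigr _ (fun r _ => c_d r)) -big_distrl /=.
by rewrite natrM mulrC mulfK ?pnatr_eq0 -?lt0n // -PoszD ler_nat.
Qed.
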